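(* Let $m\ge 3$, let $H=B(l_1,\ldots,l_m)$ with $l_m\ge 3$, and let $G'=H^2$. Let $a,b$ satisfy $1\le a<b\le m$, and let $G$ be the graph obtained from $G'$ by adding an edge between $v_{a,l_a}$ and $v_{b,l_b}$ (if they are not already adjacent). Then $G$ is equitably $(m+2)$-choosable.
   Context: All graphs are finite and simple. For $m,l_1,\ldots,l_m\in\mathbb{N}$ with $l_1\le\cdots\le l_m$, $B(l_1,\ldots,l_m)$ is the graph with vertex set $\{u\}\cup\{v_{i,j}: i\in[m], j\in[l_i]\}$ in which, for each $i\in[m]$, consecutive vertices in the sequence $u, v_{i,1},\ldots,v_{i,l_i}$ are adjacent (and there are no other edges). For a graph $H$, $H^2$ has vertex set $V(H)$ with two vertices adjacent iff their distance in $H$ is 1 or 2. A $k$-assignment $L$ assigns to each vertex a set of exactly $k$ colors; an equitable $L$-coloring of $G$ is a proper coloring $f$ with $f(v)\in L(v)$ such that no color is used more than $\lceil |V(G)|/k\rceil$ times; $G$ is equitably $k$-choosable if it has an equitable $L$-coloring for every $k$-assignment $L$. *)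

From mathcomp Require Import all_boot.
Set Implicit Arguments. Unset Strict Implicit. Unset Printing Implicit Defensive.

Definition sq_rel (T : finType) (e : rel T) : rel T :=
  fun x y => (x != y) && (e x y || [exists z, e x z && e z y]).

(* The spider B(l_1,...,l_m): vertex None is the centre u, and
   Some (existT i j) (i : 'I_m, j : 'I_(l i)) is v_{i+1, j+1}
   (0-based indices in Rocq, 1-based in the paper). *)
Definition spider_adj (m : nat) (l : 'I_m -> nat)
  : rel (option {i : 'I_m & 'I_(l i)}) :=
  fun x y =>
    match x, y with
    | None, None => false
    | None, Some s => val (tagged s) == 0
    | Some s, None => val (tagged s) == 0
    | Some s, Some t =>
        (tag s == tag t) &&
        (((val (tagged s)).+1 == val (tagged t)) ||
         ((val (tagged t)).+1 == val (tagged s)))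
    end.

Definition leg_end (m : nat) (l : 'I_m -> nat) (a : 'I_m)
  (x : option {i : 'I_m & 'I_(l i)}) : bool :=
  match x with
  | None => false
  | Some s => (tag s == a) && ((val (tagged s)).+1 == l a)
  end.

Definition spider_sq_plus_edge (m : nat) (l : 'I_m -> nat) (a b : 'I_m)
  : rel (option {i : 'I_m & 'I_(l i)}) :=
  fun x y => sq_rel (@spider_adj m l) x y ||
             (@leg_end m l a x && @leg_end m l b y) ||
             (@leg_end m l b x && @leg_end m l a y).

Definition k_assignment (T : finType) (C : eqType) (L : T -> seq C) (k : nat) : Prop :=
  forall v, uniq (L v) /\ size (L v) = k.

Definition ceil_div (n k : nat) : nat := (n + k.-1) %/ k.

Definition equitable_Lcoloring (T : finType) (e : rel T) (C : eqType)
  (L : T -> seq C) (k : nat) (f : T -> C) : Prop :=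
  [/\ forall x y, e x y -> f x != f y,
      forall v, f v \in L v
    & forall c : C, #|[pred v | f v == c]| <= ceil_div #|T| k].

Definition equitably_choosable (T : finType) (e : rel T) (k : nat) : Prop :=
  forall (C : eqType) (L : T -> seq C), k_assignment L k ->
    exists f : T -> C, equitable_Lcoloring e L k f.

From mathcomp Require Import all_boot all_order ssralg ssrnum ssrint zify.
Set Implicit Arguments. Unset Strict Implicit. Unset Printing Implicit Defensive.
Import Order.TTheory GRing.Theory Num.Theory.

(* The proof is a bandwidth argument.  First, for any loopless graph, an
   injective labelling of the vertices by integers in which adjacent vertices
   get labels differing by less than k yields an equitable list colouring
   from any k-assignment: compress the labels to ranks 0, ..., n-1, colour
   greedily in rank order avoiding the colours of the k-1 preceding ranks,
   and observe that a colour class then meets every block of k consecutive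
   ranks at most once, hence has at most ceil(n/k) vertices.

   Second, we exhibit such a labelling for k = m + 2.  The m "strands"
   0, ..., m-1 are interleaved on both sides of the centre (label 0): the
   first ceil(m/2) strands take the positive labels depth * ceil(m/2) + s + 1,
   the others the negative ones.  Leg a is laid along strand 1; leg b is
   folded: its first half runs along strand 0 and its second half continues
   strand 1 backwards past the end of leg a, so the extra edge and the fold
   both join positions at most two steps apart; the remaining legs use
   strands 2, ..., m-1.  A case analysis on distances at most two in the
   spider then shows that every edge of the graph has (m+2)-near ends.
   The argument does not need the hypothesis l_m >= 3 of the statement. *)

Definition near (k : nat) (x y : int) : bool :=
  (x - y < Posz k)%R && (y - x < Posz k)%R.

Lemma near_sym k x y : near k x y = near k y x.
Proof. by rewrite /near andbC. Qed.

Lemma near_refl k x : 0 < k -> near k x x.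
Proof. by rewrite /near subrr; lia. Qed.

Lemma free_colour (C : eqType) (s forbidden : seq C) :
  uniq s -> size forbidden < size s -> exists2 c, c \in s & c \notin forbidden.
Proof.
move=> s_uniq lt_size; apply/hasP; apply: contraT => /hasPn all_forbidden.
have : size s <= size forbidden.
  by apply: uniq_leq_size => // c /all_forbidden; rewrite negbK.
by rewrite leqNgt lt_size.
Qed.

Section Bandwidth.
Variable T : finType.

(* Rank compression of an integer labelling: the number of vertices with a
   smaller label.  It turns an injective labelling into a bijection onto
   [0, #|T|) without stretching any gap. *)
Definition rank (s : T -> int) (x : T) : nat := #|[pred y | (s y < s x)%R]|.

Lemma rank_lt (s : T -> int) x y : (s y < s x)%R -> rank s y < rank s x.
Proof.
move=> lt_yx; apply: proper_card; apply/properP; split.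
  by apply/subsetP => z; rewrite !inE => /lt_trans; apply.
by exists y; rewrite !inE ?ltxx.
Qed.

Lemma rank_inj (s : T -> int) : injective s -> injective (rank s).
Proof.
move=> s_inj x y eq_rank; case: (ltgtP (s x) (s y)) => [lt|lt|]; last exact: s_inj.
- by have := rank_lt lt; rewrite eq_rank ltnn.
- by have := rank_lt lt; rewrite eq_rank ltnn.
Qed.

Lemma rank_lt_card (s : T -> int) x : rank s x < #|T|.
Proof.
rewrite /rank -(cardC [pred y | (s y < s x)%R]) -[X in X < _]addn0 ltn_add2l.
by apply/card_gt0P; exists x; rewrite !inE ltxx.
Qed.

(* Ranks grow no faster than labels: between y and x lie at most
   s x - s y - 1 other labels. *)
Lemma rank_gap (s : T -> int) x y : injective s -> (s y < s x)%R ->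
  rank s x <= rank s y + absz (s x - s y).
Proof.
move=> s_inj lt_yx; rewrite /rank -(cardID [pred z | (s z < s y)%R]).
have -> : #|[predI [pred z | (s z < s x)%R] & [pred z | (s z < s y)%R]]| =
          #|[pred z | (s z < s y)%R]|.
  apply: eq_card => z; rewrite !inE andbC.
  by case: (ltP (s z) (s y)) => // /lt_trans ->.
rewrite leq_add2l cardE.
rewrite -(size_map (fun z => absz (s z - s y))) -[X in _ <= X](size_iota 0).
apply: uniq_leq_size.
  rewrite map_inj_in_uniq ?enum_uniq // => z w; rewrite !mem_enum !inE.
  rewrite -!leNgt => /andP [z1 _] /andP [w1 _] eq_dist; apply: s_inj; lia.
move=> n /mapP [z]; rewrite mem_enum !inE -leNgt => /andP [z1 z2] ->.
rewrite mem_iota; lia.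
Qed.

Lemma rank_near (s : T -> int) k x y : injective s -> near k (s x) (s y) ->
  (rank s x < rank s y + k) && (rank s y < rank s x + k).
Proof.
move=> s_inj; rewrite /near => /andP [xy yx].
case: (ltgtP (s x) (s y)) => [lt|lt|eq]; last by rewrite (s_inj _ _ eq); lia.
- have := rank_gap s_inj lt; have := rank_lt lt; lia.
- have := rank_gap s_inj lt; have := rank_lt lt; lia.
Qed.

Section WindowColouring.
Variables (C : eqType) (L : T -> seq C) (k : nat) (r : T -> nat).
Hypotheses (k_gt0 : 0 < k) (r_inj : injective r) (L_k : k_assignment L k).

Definition window_colouring (N : nat) (f : T -> C) : Prop :=
  (forall x, r x < N -> f x \in L x) /\
  (forall x y, r x < N -> r y < r x < r y + k -> f x != f y).

Lemma window_colouring0 : exists f, window_colouring 0 f.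
Proof.
case: (pickP (@predT T)) => [x0 _ | T_empty].
  have [_] := L_k x0; case: (L x0) => [size0|c0 _ _].
    by move: k_gt0; rewrite -size0.
  by exists (fun _ => c0).
have no_vertex : T -> False by move=> x; have := T_empty x.
by exists (fun x => False_rect C (no_vertex x)).
Qed.

Lemma window_size N :
  size [seq y <- enum T | r y < N < r y + k] <= k.-1.
Proof.
rewrite -(size_map r) -(size_iota (N.+1 - k) k.-1); apply: uniq_leq_size.
  by rewrite map_inj_uniq // filter_uniq // enum_uniq.
move=> n /mapP [y]; rewrite mem_filter => /andP [/andP [y1 y2] _] ->.
rewrite mem_iota; lia.
Qed.

(* Greedy step: the vertex of rank N takes a colour of its list unused in its
   window, which exists since the list has k colours. *)
Lemma window_colouring_step N f :
  window_colouring N f -> exists f', window_colouring N.+1 f'.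
Proof.
move=> [f_in f_ok].
case: (pickP [pred x | r x == N]) => [x /eqP rx | no_rank]; last first.
  have lt_N z : r z < N.+1 -> r z < N.
    rewrite ltnS leq_eqVlt => /orP [/eqP rz | //].
    by have := no_rank z; rewrite /= rz eqxx.
  by exists f; split=> [z /lt_N | z w /lt_N]; [apply: f_in | apply: f_ok].
pose used := [seq f y | y <- enum T & r y < N < r y + k].
have [c c_in c_free] : exists2 c, c \in L x & c \notin used.
  have [L_uniq L_size] := L_k x; apply: free_colour => //.
  by rewrite size_map L_size; have := window_size N; lia.
have below z : z != x -> r z < N.+1 -> r z < N.
  move=> zx; rewrite ltnS leq_eqVlt => /orP [/eqP rz | //].
  by case/eqP: zx; apply: r_inj; rewrite rz rx.
exists (fun z => if z == x then c else f z); split=> [z|z w].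
  by case: eqP => [-> //| /eqP zx /(below _ zx)]; apply: f_in.
move=> zN /[dup] w_win /andP [wz _] /=.
have wN : r w < N by lia.
have wx : w != x by apply: contraTneq wN => ->; rewrite rx ltnn.
rewrite (negbTE wx); case: (z =P x) => [zx | /eqP zx].
  apply: contraNneq c_free => ->; rewrite /used; apply: map_f.
  by rewrite mem_filter mem_enum andbT -rx -zx.
apply: f_ok w_win; exact: below zx zN.
Qed.

Lemma window_colouring_exists : exists f : T -> C,
  (forall x, f x \in L x) /\
  (forall x y, x != y -> r x < r y + k -> r y < r x + k -> f x != f y).
Proof.
have colouring_upto n : exists f, window_colouring n f.
  elim: n => [|n [f f_ok]]; [exact: window_colouring0 | exact: window_colouring_step f_ok].
pose N := (\max_(x : T) r x).+1.
have r_lt x : r x < N by rewrite ltnS leq_bigmax.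
have [f [f_in f_ok]] := colouring_upto N.
exists f; split=> [x | x y xy xy_lt yx_lt]; first exact: f_in (r_lt x).
have r_xy : r x != r y by apply: contra xy => /eqP /r_inj ->.
case: (ltngtP (r x) (r y)) => [lt | lt | eq]; last by rewrite eq eqxx in r_xy.
- by rewrite eq_sym; apply: f_ok (r_lt y) _; rewrite lt.
- by apply: f_ok (r_lt x) _; rewrite lt.
Qed.
End WindowColouring.

(* In a colouring where vertices of ranks less than k apart get distinct
   colours, a colour class meets each block [ik, (i+1)k) of ranks at most
   once, so it has at most ceil(#|T| / k) vertices. *)
Lemma window_class_bound (C : eqType) (f : T -> C) (k : nat) (r : T -> nat) :
  0 < k -> injective r -> (forall x, r x < #|T|) ->
  (forall x y, x != y -> r x < r y + k -> r y < r x + k -> f x != f y) ->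
  forall c, #|[pred v | f v == c]| <= ceil_div #|T| k.
Proof.
move=> k_gt0 r_inj r_lt f_ok c; rewrite cardE.
rewrite -(size_map (fun v => r v %/ k)) -(size_iota 0 (ceil_div #|T| k)).
apply: uniq_leq_size.
  rewrite map_inj_in_uniq ?enum_uniq // => v w.
  rewrite !mem_enum !inE => /eqP fv /eqP fw same_block.
  have [vw_lt wv_lt] : r v < r w + k /\ r w < r v + k.
    have := divn_eq (r v) k; have := divn_eq (r w) k.
    have := ltn_mod (r v) k; have := ltn_mod (r w) k; rewrite k_gt0 same_block.
    split; nia.
  apply: contraTeq (eqxx c) => vw.
  by rewrite -[X in X != _]fv -fw; apply: f_ok.
move=> n /mapP [v _ ->]; rewrite mem_iota add0n /ceil_div ltn_divLR //.
have := divn_eq (#|T| + k.-1) k; have := ltn_mod (#|T| + k.-1) k.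
have := r_lt v; rewrite k_gt0; nia.
Qed.

Theorem bandwidth_equitable (e : rel T) (k : nat) (s : T -> int) :
  0 < k -> injective s -> (forall x y, e x y -> x != y) ->
  (forall x y, e x y -> near k (s x) (s y)) -> equitably_choosable e k.
Proof.
move=> k_gt0 s_inj e_loopless e_near C L L_k.
have rank_s_inj := rank_inj s_inj.
have [f [f_in f_ok]] := window_colouring_exists k_gt0 rank_s_inj L_k.
exists f; split=> // [x y exy | c].
  have /andP [] := rank_near s_inj (e_near _ _ exy).
  exact: f_ok (e_loopless _ _ exy).
exact: window_class_bound k_gt0 rank_s_inj (rank_lt_card s) f_ok c.
Qed.

End Bandwidth.

(* Consecutive depths of a strand are
   p (or q) apart, so with a balanced split a step of two along a strand, or
   any move among the positions next to the centre, changes the label by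
   less than p + q + 2. *)
Section Zigzag.
Variables p q : nat.
Hypothesis balanced : q <= p <= q.+1.

Definition zigzag (s e : nat) : int :=
  if s < p then Posz (p * e + s + 1) else (- Posz (q * e + (s - p) + 1))%R.

Local Notation near_pq := (near (p + q + 2)).

Lemma zigzag_neq0 s e : zigzag s e != 0%R.
Proof. by rewrite /zigzag; case: ifP => _; apply/eqP; lia. Qed.

Lemma zigzag_inj s e s' e' : s < p + q -> s' < p + q ->
  zigzag s e = zigzag s' e' -> s = s' /\ e = e'.
Proof.
rewrite /zigzag => s_lt s'_lt; case: ifP => s_p; case: ifP => s'_p eq_lab; try lia.
  have {}eq_lab : p * e + s = p * e' + s' by lia.
  case: (ltngtP e e') => e_e'; [nia | nia | subst; lia].
have {}eq_lab : q * e + (s - p) = q * e' + (s' - p) by lia.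
case: (ltngtP e e') => e_e'; [nia | nia | subst; lia].
Qed.

Lemma zigzag_step s e e' : e <= e' + 2 -> e' <= e + 2 ->
  near_pq (zigzag s e) (zigzag s e').
Proof.
wlog le_ee' : e e' / e <= e' => [in_order le1 le2 | _ le2].
  by case: (leqP e e') => [|/ltnW] le; [|rewrite near_sym]; apply: in_order.
have [d [-> d_le]] : exists d, e' = e + d /\ d <= 2 by exists (e' - e); lia.
have : p * d <= 2 * p /\ q * d <= 2 * q by split; nia.
by rewrite /near /zigzag mulnDr; case: ifP => _; lia.
Qed.

(* All depth-0 positions lie in [-q, p]. *)
Lemma zigzag_roots s s' : s < p + q -> s' < p + q -> near_pq (zigzag s 0) (zigzag s' 0).
Proof.
rewrite /near /zigzag !muln0 => s_lt s'_lt.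
by case: ifP => s_p; case: ifP => s'_p; lia.
Qed.

Lemma zigzag_centre s e : s < p + q -> e <= 1 -> near_pq 0 (zigzag s e).
Proof. by rewrite /near /zigzag => s_lt e_le; case: ifP => s_p; nia. Qed.

(* Strands 0 and 1 are adjacent on the positive side (when p >= 2), so a
   path may switch between them while its depth changes by at most one. *)
Lemma zigzag_turn e1 e2 : 2 <= p -> e1 <= e2 + 1 -> e2 <= e1 + 2 ->
  near_pq (zigzag 1 e1) (zigzag 0 e2).
Proof.
rewrite /near /zigzag => p_ge2 le1 le2; rewrite p_ge2 (ltnW p_ge2).
case: (leqP e1 e2) => [le | lt].
  have [d [-> d_le]] : exists d, e2 = e1 + d /\ d <= 2 by exists (e2 - e1); lia.
  have : p * d <= 2 * p by nia.
  by rewrite mulnDr; lia.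
have -> : e1 = e2 + 1 by lia.
by rewrite mulnDr; lia.
Qed.
End Zigzag.

Lemma uphalf_bounds n : n <= uphalf n + uphalf n <= n.+1.
Proof. by rewrite addnn uphalfK; case: (odd n); rewrite /= ?leqnSn ?leqnn. Qed.

(* Leg a is strand 1; leg b is folded at
   h = ceil((la + lb) / 2): its positions j < h form strand 0 and the others
   continue strand 1 beyond leg a, in reverse order, so that the end of leg b
   sits at depth la of strand 1 (or near the start of strand 0 when lb is
   small), next to the end la - 1 of leg a.  The other legs are
   strands 2, ..., m - 1 in increasing order. *)
Definition spider_layout (a b la lb i j : nat) : nat * nat :=
  if i == a then (1, j)
  else if i == b then
    (if j < uphalf (la + lb) then (0, j) else (1, la + lb - j.+1))
  else ((i - (a < i) - (b < i)).+2, j).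

Section Layout.
Variables a b la lb : nat.
Hypotheses (lt_ab : a < b) (la_gt0 : 0 < la).

Local Notation layout := (spider_layout a b la lb).

Lemma layout_strand_lt m i j : b < m -> i < m -> (layout i j).1 < m.
Proof.
rewrite /spider_layout => b_lt i_lt; case: eqP => [_|ia] /=; first lia.
case: eqP => [_|ib] /=; first by case: ifP => /= _; lia.
by case: (ltnP a i) => ?; case: (ltnP b i) => ? /=; lia.
Qed.

Definition on_leg (i j : nat) : Prop := (i = a -> j < la) /\ (i = b -> j < lb).

Lemma layout_inj i j i' j' : on_leg i j -> on_leg i' j' ->
  layout i j = layout i' j' -> i = i' /\ j = j'.
Proof.
rewrite /spider_layout => -[ja jb] [ja' jb'].
have := uphalf_bounds (la + lb); move: (uphalf (la + lb)) => h h_bounds.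
case: (i =P a) => ia; case: (i' =P a) => ia'; case: (i =P b) => ib; case: (i' =P b) => ib' /=;
  try (case: ifP => /= ?); try (case: ifP => /= ?);
  case: (ltnP a i) => ?; case: (ltnP b i) => ?; case: (ltnP a i') => ?; case: (ltnP b i') => ? /=;
  move=> E; have E1 := congr1 fst E; have E2 := congr1 snd E; simpl in E1, E2; lia.
Qed.

Lemma layout_depth_root i : (layout i 0).2 = 0.
Proof.
rewrite /spider_layout; case: eqP => //= _; case: eqP => //= _.
by have := uphalf_bounds (la + lb); case: ifP => //=; lia.
Qed.

Lemma layout_depth_le1 i j : on_leg i j -> j <= 1 -> (layout i j).2 <= 1.
Proof.
rewrite /spider_layout => -[_ jb] j_le; case: eqP => //= _; case: eqP => //= ib.
have := uphalf_bounds (la + lb); have := jb ib; case: ifP => //=; lia.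
Qed.
End Layout.

Lemma uphalf_balanced m : m./2 <= uphalf m <= (m./2).+1.
Proof. by rewrite uphalf_half; case: (odd m); rewrite /= ?leqnSn ?leqnn. Qed.

Lemma uphalf_add_half m : uphalf m + m./2 = m.
Proof. by rewrite uphalf_half -addnA addnn odd_double_half. Qed.

Definition spider_pos_label (m a b la lb i j : nat) : int :=
  zigzag (uphalf m) m./2 (spider_layout a b la lb i j).1 (spider_layout a b la lb i j).2.

Section PositionLabels.
Variables m a b la lb : nat.
Hypotheses (m_ge3 : 3 <= m) (lt_ab : a < b) (lt_bm : b < m).
Hypotheses (la_gt0 : 0 < la) (le_lab : la <= lb).

Local Notation layout := (spider_layout a b la lb).
Local Notation label := (spider_pos_label m a b la lb).
Local Notation on_leg := (on_leg a b la lb).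
Local Notation near_m := (near (m + 2)).

Let balanced := uphalf_balanced m.
Let near_mE : near_m = near (uphalf m + m./2 + 2).
Proof. by rewrite uphalf_add_half. Qed.
Let strand_lt i j : i < m -> (layout i j).1 < uphalf m + m./2.
Proof. by rewrite uphalf_add_half; apply: layout_strand_lt. Qed.

Lemma label_neq0 i j : label i j != 0%R.
Proof. exact: zigzag_neq0. Qed.

Lemma label_inj i j i' j' : i < m -> i' < m -> on_leg i j -> on_leg i' j' ->
  label i j = label i' j' -> i = i' /\ j = j'.
Proof.
move=> i_lt i'_lt on_ij on_ij'.
move=> /(zigzag_inj balanced (strand_lt _ i_lt) (strand_lt _ i'_lt)) [E1 E2].
apply: layout_inj on_ij on_ij' _ => //.
by rewrite [LHS]surjective_pairing [RHS]surjective_pairing E1 E2.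
Qed.

Lemma label_centre i j : i < m -> on_leg i j -> j <= 1 -> near_m 0 (label i j).
Proof.
move=> i_lt on_ij j_le; rewrite near_mE.
apply: (zigzag_centre balanced (strand_lt _ i_lt)); exact: layout_depth_le1.
Qed.

Lemma label_roots i i' : i < m -> i' < m -> near_m (label i 0) (label i' 0).
Proof.
move=> i_lt i'_lt; rewrite near_mE /spider_pos_label !layout_depth_root //.
exact: zigzag_roots balanced _ _ (strand_lt _ i_lt) (strand_lt _ i'_lt).
Qed.

(* As m >= 3, strands 0 and 1 are both on the positive side. *)
Let two_le_p : 2 <= uphalf m.
Proof. by rewrite geq_uphalf_double. Qed.

(* Positions at most two apart along one leg get near labels; on leg b this
   includes the two positions on either side of the fold. *)
Lemma label_leg_step i j j' : on_leg i j -> on_leg i j' ->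
  j <= j' + 2 -> j' <= j + 2 -> near_m (label i j) (label i j').
Proof.
wlog le_jj' : j j' / j <= j' => [in_order on_ij on_ij' le1 le2 | on_ij on_ij' _ le2].
  by case: (leqP j j') => [|/ltnW] le; [|rewrite near_sym]; apply: in_order.
rewrite near_mE /spider_pos_label /spider_layout.
case: eqP => [_ | _] /=; first by apply: (zigzag_step balanced); lia.
case: eqP => [ib | _] /=; last by apply: (zigzag_step balanced); lia.
have := on_ij'.2 ib; have := uphalf_bounds (la + lb).
case: ifP => j_lt; case: ifP => j'_lt /= h_bounds j'_lt_lb.
- by apply: (zigzag_step balanced); lia.
- by rewrite near_sym; apply: (zigzag_turn balanced) => //; lia.
- lia.
- by apply: (zigzag_step balanced); lia.
Qed.

Lemma label_leg_ends : near_m (label a la.-1) (label b lb.-1).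
Proof.
rewrite near_mE /spider_pos_label /spider_layout eqxx (gtn_eqF lt_ab) eqxx /=.
have := uphalf_bounds (la + lb); case: ifP => lb_lt /= h_bounds.
  by apply: (zigzag_turn balanced) => //; lia.
by apply: (zigzag_step balanced); lia.
Qed.
End PositionLabels.

Section SpiderLabel.
Variables (m : nat) (l : 'I_m -> nat) (a b : 'I_m).
Hypotheses (m_ge3 : 3 <= m) (lt_ab : a < b).
Hypotheses (la_gt0 : 0 < l a) (le_lab : l a <= l b).

Local Notation vertex := (option {i : 'I_m & 'I_(l i)}).
Local Notation adj := (@spider_adj m l).
Local Notation near_m := (near (m + 2)).
Local Notation edge := (@spider_sq_plus_edge m l a b).

Let lt_bm : b < m := ltn_ord b.

Definition spider_label (x : vertex) : int :=
  if x is Some s then spider_pos_label m a b (l a) (l b) (tag s) (tagged s) else 0%R.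

Definition spider_dist_le2 (x y : vertex) : bool :=
  match x, y with
  | None, None => true
  | None, Some t | Some t, None => tagged t <= 1
  | Some s, Some t =>
      [&& tag s == tag t, tagged s <= tagged t + 2 & tagged t <= tagged s + 2]
      || (tagged s == 0 :> nat) && (tagged t == 0 :> nat)
  end.

Lemma spider_adj_dist_le2 x y : adj x y -> spider_dist_le2 x y.
Proof.
case: x => [s|]; case: y => [t|] //=; try by move=> /eqP ->.
case/andP=> -> d; apply/orP; left.
by case/orP: d => /eqP d; apply/andP; split; lia.
Qed.

Lemma spider_sq_dist_le2 x y : sq_rel adj x y -> spider_dist_le2 x y.
Proof.
case/andP=> _ /orP [/spider_adj_dist_le2 // | /existsP [z /andP []]].
case: x => [s|]; case: z => [w|]; case: y => [t|] //=.
- move=> /andP [/eqP sw d1] /andP [/eqP wt d2]; apply/orP; left.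
  have -> : tag s == tag t by rewrite sw wt.
  by case/orP: d1 => /eqP d1; case/orP: d2 => /eqP d2; apply/andP; split; lia.
- by move=> /andP [_ d] /eqP w0; case/orP: d => /eqP d; lia.
- by move=> /eqP -> /eqP ->; rewrite orbT.
- by move=> /eqP w0 /andP [_ d]; case/orP: d => /eqP d; lia.
Qed.

Lemma vertex_on_leg (s : {i : 'I_m & 'I_(l i)}) (i : nat) :
  (tag s : nat) = i -> on_leg a b (l a) (l b) i (tagged s).
Proof. by move=> <-; split=> /val_inj <-; exact: ltn_ord. Qed.

Lemma spider_label_inj : injective spider_label.
Proof.
case=> [s|] [t|] //= => [eq_lab | eq_lab | eq_lab]; last 2 first.
- by have := label_neq0 m a b (l a) (l b) (tag s) (tagged s); rewrite eq_lab eqxx.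
- by have := label_neq0 m a b (l a) (l b) (tag t) (tagged t); rewrite eq_lab eqxx.
have [eq_leg eq_depth] := label_inj lt_ab lt_bm la_gt0
  (ltn_ord _) (ltn_ord _) (vertex_on_leg erefl) (vertex_on_leg erefl) eq_lab.
case: s t eq_leg eq_depth {eq_lab} => [i j] [i' j'] /= /val_inj eq_i.
by subst i' => /val_inj ->.
Qed.

Lemma spider_label_dist_le2 x y : spider_dist_le2 x y ->
  near_m (spider_label x) (spider_label y).
Proof.
have centre (t : {i : 'I_m & 'I_(l i)}) :
    (tagged t : nat) <= 1 -> near_m 0 (spider_label (Some t)).
  move=> t_le; apply: (label_centre lt_ab lt_bm la_gt0 (ltn_ord _) _ t_le).
  exact: vertex_on_leg.
case: x => [s|]; case: y => [t|] //=; last by rewrite near_refl ?addn2.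
- case/orP => [/and3P [/eqP st le1 le2] | /andP [/eqP s0 /eqP t0]].
    have st_nat : (tag s : nat) = tag t by rewrite st.
    rewrite st_nat; apply: (label_leg_step m_ge3 lt_ab lt_bm la_gt0 le_lab) => //.
    - exact: vertex_on_leg.
    - exact: vertex_on_leg.
  by rewrite s0 t0; apply: (label_roots (l b) lt_ab lt_bm la_gt0); exact: ltn_ord.
- by move=> /centre; rewrite near_sym.
- exact: centre.
Qed.

Lemma spider_label_leg_ends x y : leg_end a x -> leg_end b y ->
  near_m (spider_label x) (spider_label y).
Proof.
case: x => [s|]; case: y => [t|] //=.
move=> /andP [/eqP sa /eqP s_end] /andP [/eqP tb /eqP t_end].
have -> : (tag s : nat) = a by rewrite sa.
have -> : (tag t : nat) = b by rewrite tb.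
have -> : (tagged s : nat) = (l a).-1 by rewrite -s_end.
have -> : (tagged t : nat) = (l b).-1 by rewrite -t_end.
exact: label_leg_ends m_ge3 lt_ab lt_bm la_gt0 le_lab.
Qed.

Lemma spider_edge_near x y : edge x y ->
  near_m (spider_label x) (spider_label y).
Proof.
case/orP => [/orP [/spider_sq_dist_le2 | /andP [xa yb]] | /andP [xb ya]].
- exact: spider_label_dist_le2.
- exact: spider_label_leg_ends.
- by rewrite near_sym; apply: spider_label_leg_ends.
Qed.

(* No vertex ends two distinct legs, so the extra edge is not a loop. *)
Lemma spider_edge_loopless x y : edge x y -> x != y.
Proof.
have two_ends z : @leg_end m l a z -> @leg_end m l b z -> False.
  case: z => [s|] //= /andP [/eqP sa _] /andP [/eqP sb _].
  by move: lt_ab; rewrite -sa -sb ltnn.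
case/orP => [/orP [/andP [] // | /andP [xa yb]] | /andP [xb ya]];
  apply/eqP => eq_xy; subst y; [exact: two_ends xa yb | exact: two_ends ya xb].
Qed.
End SpiderLabel.

Theorem lemma3p9 (m : nat) (l : 'I_m -> nat) (a b : 'I_m) :
  3 <= m ->
  (forall i : 'I_m, 0 < l i) ->
  (forall i j : 'I_m, i <= j -> l i <= l j) ->
  (forall i : 'I_m, i.+1 = m -> 3 <= l i) ->
  a < b ->
  equitably_choosable (@spider_sq_plus_edge m l a b) (m + 2).
Proof.
move=> m_ge3 l_gt0 l_mono _ lt_ab.
have le_lab : l a <= l b by apply: l_mono; exact: ltnW.
apply: (@bandwidth_equitable _ _ _ (spider_label a b)).
- by rewrite addn2.
- exact: spider_label_inj.
- exact: spider_edge_loopless.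
- exact: spider_edge_near.
Qed.
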